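(* For any time warp $f$, $n\in\omega\setminus\{0\}$, and $m\in\omega$: $f^{\ell}(n)=m\iff f(m-1)<n\le f(m)$; $f^{\ell}(n)=\omega\iff f(\omega)<n$; $f^{\ell}(\omega)=m\iff f(m)=\omega$ and $f^{\ell}(k)=m$ for some $k\in\omega$; $f^{\ell}(\omega)=\omega\iff f(\omega)<\omega$ or ($f(\omega)=\omega$ and $f(k)<\omega$ for all $k\in\omega$).
   Context: Let $\overline{\omega}=\omega\cup\{\omega\}$ be the natural numbers with a top element $\omega$ adjoined, with its natural total order. A time warp is a monotone map $f\colon\overline{\omega}\to\overline{\omega}$ with $f(0)=0$ and $f(\omega)=\bigvee\{f(n)\mid n\in\omega\}$. The set $W$ of time warps is ordered pointwise and $fg:=f\circ g$; $\mathrm{id}$ is the identity. The right residual $/$ is the binary operation on $W$ with $f\le h/g\iff fg\le h$ for all $f,g,h\in W$. Define $f^{\ell}:=\mathrm{id}/f$. *)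

From Stdlib Require Import Arith Lia.

Inductive wbar : Type :=
| Fin : nat -> wbar
| Om : wbar.

Definition wle (x y : wbar) : Prop :=
  match x, y with
  | Fin m, Fin n => m <= n
  | _, Om => True
  | Om, Fin _ => False
  end.

Definition wlt (x y : wbar) : Prop := wle x y /\ x <> y.

Definition is_sup (s : wbar) (F : nat -> wbar) : Prop :=
  (forall n, wle (F n) s) /\ (forall u, (forall n, wle (F n) u) -> wle s u).

Definition time_warp (f : wbar -> wbar) : Prop :=
  (forall x y, wle x y -> wle (f x) (f y)) /\
  f (Fin 0) = Fin 0 /\
  is_sup (f Om) (fun n => f (Fin n)).

Definition fle (f g : wbar -> wbar) : Prop := forall x, wle (f x) (g x).

(* r is the right residual h / g in W: for every time warp f,
   f <= r  <->  f o g <= h. *)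
Definition is_rresidual (r h g : wbar -> wbar) : Prop :=
  time_warp r /\
  forall f, time_warp f -> (fle f r <-> fle (fun x => f (g x)) h).

Definition is_lres (fl f : wbar -> wbar) : Prop :=
  is_rresidual fl (fun x => x) f.

(** The residual [fl = id / f] is the largest time warp with [fl ∘ f <= id].
    For finite arguments this makes [fl] the lower adjoint of [f]:
    [fl n <= m <-> n <= f m].  Indeed [fl (f m) <= m] gives one direction,
    and if [f m < n] then the warp [h] jumping from [0] to [m + 1] at [n]
    satisfies [h ∘ f <= id] by monotonicity of [f], so [h <= fl] forces
    [fl n > m].  The four clauses then follow from
    this equivalence, since [fl ω] and [f ω] are suprema, and a finite
    supremum in ω̄ is attained. *)

From Stdlib Require Import Arith Lia Classical.

Lemma wle_refl x : wle x x.
Proof. destruct x; simpl; auto. Qed.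

Lemma wle_trans x y z : wle x y -> wle y z -> wle x z.
Proof. destruct x, y, z; simpl; intros; auto; try lia; contradiction. Qed.

Lemma wle_antisym x y : wle x y -> wle y x -> x = y.
Proof. destruct x, y; simpl; intros; try contradiction; auto. f_equal; lia. Qed.

Lemma Fin0_wle x : wle (Fin 0) x.
Proof. destruct x; simpl; auto; lia. Qed.

Lemma wle_Om x : wle x Om.
Proof. destruct x; exact I. Qed.

Lemma not_wle_iff_wlt x y : ~ wle x y <-> wlt y x.
Proof.
  unfold wlt; destruct x as [a|], y as [b|]; simpl.
  - split; [intros H; split; [lia | intros [= ->]; lia] | intros [H1 H2] Hab].
    apply H2; f_equal; lia.
  - tauto.
  - split; [intros _; split; [exact I | discriminate] | tauto].
  - split; [tauto | intros [_ H]; congruence].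
Qed.

Lemma wle_or_wlt x y : wle x y \/ wlt y x.
Proof.
  destruct x as [a|], y as [b|]; simpl; auto.
  - destruct (le_lt_dec a b); [now left | right; apply not_wle_iff_wlt; simpl; lia].
  - right; apply not_wle_iff_wlt; simpl; auto.
Qed.

Lemma not_wlt_Fin0 x : ~ wlt x (Fin 0).
Proof. rewrite <- not_wle_iff_wlt. intros H; apply H, Fin0_wle. Qed.

Lemma wlt_FinS x p : wlt x (Fin (S p)) <-> wle x (Fin p).
Proof. rewrite <- not_wle_iff_wlt. destruct x; simpl; lia. Qed.

Lemma wlt_Om x : wlt x Om <-> x <> Om.
Proof. unfold wlt; destruct x; simpl; tauto. Qed.

Lemma eq_Om_iff x : x = Om <-> forall n, wle (Fin n) x.
Proof.
  split; [intros -> n; exact I|].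
  destruct x as [a|]; auto. intros H. specialize (H (S a)). simpl in H. lia.
Qed.

Lemma eq_Om_iff_not_le x : x = Om <-> forall m, ~ wle x (Fin m).
Proof.
  split; [intros -> m; simpl; tauto|].
  destruct x as [a|]; auto. intros H. contradiction (H a). apply wle_refl.
Qed.

(* The hypothesis [1 <= x] makes the case [m = 0], where [m - 1] truncates to [0],
   come out false on both sides. *)
Lemma eq_Fin_iff x m :
  wle (Fin 1) x -> (x = Fin m <-> ~ wle x (Fin (m - 1)) /\ wle x (Fin m)).
Proof.
  destruct x as [a|]; simpl; intros H1.
  - split; [intros [= ->]; lia | intros [H2 H3]; f_equal; lia].
  - split; [discriminate | tauto].
Qed.

Section Supremum.
Variables (s : wbar) (F : nat -> wbar).
Hypothesis sup_s : is_sup s F.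

Lemma is_sup_ub k : wle (F k) s.
Proof. apply sup_s. Qed.

Lemma is_sup_le_iff u : wle s u <-> forall k, wle (F k) u.
Proof.
  split; [|apply sup_s]. intros H k. exact (wle_trans _ _ _ (is_sup_ub k) H).
Qed.

Lemma is_sup_lt_Fin_iff n : wlt s (Fin n) <-> forall k, wlt (F k) (Fin n).
Proof.
  destruct n as [|p].
  - split; [intros H; contradiction (not_wlt_Fin0 s) | intros H].
    contradiction (not_wlt_Fin0 _ (H 0)).
  - rewrite wlt_FinS, is_sup_le_iff. setoid_rewrite wlt_FinS. tauto.
Qed.

Lemma is_sup_Fin_attained a : s = Fin a -> exists k, F k = Fin a.
Proof.
  intros Es. apply not_all_not_ex. intros Hne.
  assert (Hlt : wlt s (Fin a)).
  { apply is_sup_lt_Fin_iff. intros k. split; [rewrite <- Es; apply is_sup_ub | apply Hne]. }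
  destruct Hlt as [_ Hs]. contradiction.
Qed.

End Supremum.

Definition step (n : nat) (v : wbar) (x : wbar) : wbar :=
  match x with Fin k => if k <? n then Fin 0 else v | Om => v end.

Lemma step_below n v y : wlt y (Fin n) -> step n v y = Fin 0.
Proof.
  intros H. apply not_wle_iff_wlt in H.
  destruct y as [k|]; simpl in *; [|tauto].
  replace (k <? n) with true; [reflexivity | symmetry; apply Nat.ltb_lt; lia].
Qed.

Lemma step_above n v y : wle (Fin n) y -> step n v y = v.
Proof.
  destruct y as [k|]; simpl; intros H; auto.
  replace (k <? n) with false; [reflexivity | symmetry; apply Nat.ltb_ge; lia].
Qed.

Lemma step_le n v y : wle (step n v y) v.
Proof.
  destruct (wle_or_wlt (Fin n) y) as [H|H].
  - rewrite step_above by exact H. apply wle_refl.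
  - rewrite step_below by exact H. apply Fin0_wle.
Qed.

Lemma step_time_warp n v : n <> 0 -> time_warp (step n v).
Proof.
  intros Hn. split; [|split].
  - intros x y Hxy. destruct (wle_or_wlt (Fin n) x) as [H|H].
    + rewrite !step_above by eauto using wle_trans. apply wle_refl.
    + rewrite step_below by exact H. apply Fin0_wle.
  - apply step_below, not_wle_iff_wlt. simpl. lia.
  - split; [intros k; apply step_le|].
    intros u Hu. specialize (Hu n). rewrite step_above in Hu by apply wle_refl. exact Hu.
Qed.

Section LeftResidual.
Variables f fl : wbar -> wbar.
Hypothesis f_warp : time_warp f.
Hypothesis fl_lres : is_lres fl f.

Lemma lres_time_warp : time_warp fl.
Proof. apply fl_lres. Qed.

Lemma lres_counit x : wle (fl (f x)) x.
Proof.
  destruct fl_lres as [Hw H]. apply (proj1 (H fl Hw)). intros y; apply wle_refl.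
Qed.

Lemma lres_maximal h : time_warp h -> (forall x, wle (h (f x)) x) -> forall x, wle (h x) (fl x).
Proof. intros Hw Hc. apply (proj2 (proj2 fl_lres h Hw)). exact Hc. Qed.

Lemma step_comp_warp_le_id n m :
  wlt (f (Fin m)) (Fin n) -> forall x, wle (step n (Fin (S m)) (f x)) x.
Proof.
  intros Hlt [j|]; [|apply wle_Om].
  destruct (le_lt_dec (S m) j) as [Hj|Hj].
  - apply (wle_trans _ _ _ (step_le _ _ _)). simpl. lia.
  - rewrite step_below; [apply Fin0_wle|].
    apply not_wle_iff_wlt. intros Hge. apply not_wle_iff_wlt in Hlt. apply Hlt.
    apply (wle_trans _ _ _ Hge), f_warp. simpl. lia.
Qed.

Lemma lres_Fin_gt n m : wlt (f (Fin m)) (Fin n) -> wle (Fin (S m)) (fl (Fin n)).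
Proof.
  intros Hlt.
  assert (Hn : n <> 0) by (intros ->; apply (not_wlt_Fin0 _ Hlt)).
  pose proof (lres_maximal _ (step_time_warp n (Fin (S m)) Hn)
                (step_comp_warp_le_id n m Hlt) (Fin n)) as Hge.
  rewrite step_above in Hge by apply wle_refl. exact Hge.
Qed.

Lemma lres_le_Fin_iff n m : wle (fl (Fin n)) (Fin m) <-> wle (Fin n) (f (Fin m)).
Proof.
  split.
  - intros Hle. destruct (wle_or_wlt (Fin n) (f (Fin m))) as [|Hlt]; auto.
    pose proof (wle_trans _ _ _ (lres_Fin_gt n m Hlt) Hle). simpl in *. lia.
  - intros H. apply (wle_trans _ (fl (f (Fin m)))); [apply lres_time_warp, H | apply lres_counit].
Qed.

Lemma lres_Fin_ge1 n : n <> 0 -> wle (Fin 1) (fl (Fin n)).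
Proof.
  intros Hn. destruct (wle_or_wlt (Fin 1) (fl (Fin n))) as [|H]; auto.
  apply wlt_FinS, lres_le_Fin_iff in H. destruct f_warp as [_ [Hf0 _]].
  rewrite Hf0 in H. simpl in H. lia.
Qed.

Lemma lres_Fin_eq_Fin n m : n <> 0 ->
  (fl (Fin n) = Fin m <-> wlt (f (Fin (m - 1))) (Fin n) /\ wle (Fin n) (f (Fin m))).
Proof.
  intros Hn. rewrite eq_Fin_iff by now apply lres_Fin_ge1.
  rewrite !lres_le_Fin_iff, not_wle_iff_wlt. tauto.
Qed.

Lemma lres_Fin_eq_Om n : fl (Fin n) = Om <-> wlt (f Om) (Fin n).
Proof.
  rewrite (is_sup_lt_Fin_iff _ _ (proj2 (proj2 f_warp))), eq_Om_iff_not_le.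
  setoid_rewrite lres_le_Fin_iff. setoid_rewrite not_wle_iff_wlt. reflexivity.
Qed.

Lemma lres_Om_le_Fin_iff m : wle (fl Om) (Fin m) <-> f (Fin m) = Om.
Proof.
  rewrite (is_sup_le_iff _ _ (proj2 (proj2 lres_time_warp))), eq_Om_iff.
  setoid_rewrite lres_le_Fin_iff. reflexivity.
Qed.

Lemma lres_Om_eq_Fin m :
  fl Om = Fin m <-> f (Fin m) = Om /\ exists k, fl (Fin k) = Fin m.
Proof.
  pose proof (proj2 (proj2 lres_time_warp)) as sup_fl.
  split.
  - intros E. split; [apply lres_Om_le_Fin_iff; rewrite E; apply wle_refl|].
    exact (is_sup_Fin_attained _ _ sup_fl m E).
  - intros [Hfm [k Hk]]. apply wle_antisym; [apply lres_Om_le_Fin_iff, Hfm|].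
    rewrite <- Hk. exact (is_sup_ub _ _ sup_fl k).
Qed.

Lemma lres_Om_eq_Om :
  fl Om = Om <-> wlt (f Om) Om \/ (f Om = Om /\ forall k, wlt (f (Fin k)) Om).
Proof.
  rewrite eq_Om_iff_not_le. setoid_rewrite lres_Om_le_Fin_iff.
  setoid_rewrite wlt_Om. split.
  - intros H. destruct (f Om) eqn:E; [left; discriminate | right; auto].
  - intros [H | [_ H]] k; [|apply H]. intros Hk.
    pose proof (is_sup_ub _ _ (proj2 (proj2 f_warp)) k) as Hle.
    cbv beta in Hle. rewrite Hk in Hle. apply H, wle_antisym; [apply wle_Om | exact Hle].
Qed.

End LeftResidual.

Theorem lemma2p7 (f fl : wbar -> wbar) :
  time_warp f -> is_lres fl f ->
  (forall n m : nat, n <> 0 ->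
     (fl (Fin n) = Fin m <-> (wlt (f (Fin (m - 1))) (Fin n) /\ wle (Fin n) (f (Fin m))))) /\
  (forall n : nat, n <> 0 -> (fl (Fin n) = Om <-> wlt (f Om) (Fin n))) /\
  (forall m : nat,
     fl Om = Fin m <-> (f (Fin m) = Om /\ exists k : nat, fl (Fin k) = Fin m)) /\
  (fl Om = Om <->
     (wlt (f Om) Om \/ (f Om = Om /\ forall k : nat, wlt (f (Fin k)) Om))).
Proof.
  intros f_warp fl_lres. split; [|split; [|split]].
  - intros n m. exact (lres_Fin_eq_Fin f fl f_warp fl_lres n m).
  - intros n _. exact (lres_Fin_eq_Om f fl f_warp fl_lres n).
  - exact (lres_Om_eq_Fin f fl f_warp fl_lres).
  - exact (lres_Om_eq_Om f fl f_warp fl_lres).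
Qed.
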